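(* Let $G$ be a connected graph and $(T,\mathcal V)$, $\mathcal V=(V_t : t \in T)$, a normal semi-partition tree of $G$. Then: (1) for incomparable $t,t' \in T$, the set $V(\lceil t\rceil \cap \lceil t'\rceil)$ separates $V_t$ from $V_{t'}$ in $G$; (2) for every connected subgraph $H$ of $G$ meeting $G(T)$ there is a unique $\le_T$-minimal element $t \in T$ with $V_t \cap V(H) \ne \emptyset$; (3) if $T' \subseteq T$ is down-closed, then every component of $G(T) - G(T')$ is $G(\lfloor t\rfloor)$ for some $t$ minimal in $T \setminus T'$; (4) if $T' \subseteq T$ is down-closed, then for every component $C$ of $G - G(T')$ that meets $G(T)$, the graph $C \cap G(T)$ is a component of $G(T) - G(T')$.
   Context: An order tree is a poset $(T,\le)$ with a unique minimal element (root) in which every down-closure $\lceil t\rceil=\{t'\le t\}$ is well-ordered; write $\mathring{\lceil t\rceil}=\lceil t\rceil\setminus\{t\}$, $\lfloor t\rfloor = \{t' \in T: t' \ge t\}$. A set $X\subseteq T$ is down-closed (a rooted subtree) if it equals its down-closure. For an order tree $T$, a $T$-graph is a graph on vertex set $T$ in which the endvertices of every edge are comparable and, for each $t$, the set of neighbours of $t$ below $t$ is cofinal in $\mathring{\lceil t\rceil}$. For a graph $G$ and family $\mathcal V=(V_t: t\in T)$ of nonempty vertex sets, $(T,\mathcal V)$ is a normal semi-partition tree of $G$ if: (a) the $V_t$ are pairwise disjoint; (b) each $G[V_t]$ is connected; (c) the graph obtained from $G[\bigcup\mathcal V]$ by contracting each $V_t$ to a single vertex $t$ (deleting loops and parallel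 edges) is a $T$-graph; (d) for every $\bigcup\mathcal V$-path $P$ in $G$ (a path with at least one edge, endvertices in $\bigcup \mathcal V$, inner vertices outside $\bigcup\mathcal V$, and no edge inside $G[\bigcup\mathcal V]$) with endvertices in $V_t$ and $V_{t'}$, the nodes $t,t'$ are comparable. For $S\subseteq T$ put $V(S)=\bigcup_{t\in S}V_t$ and $G(S)=G[V(S)]$. *)

(* graphs and order trees as plain relations on arbitrary
   (possibly infinite) types; vertex sets are predicates. *)
From Stdlib Require Import List Relations.
Import ListNotations.
Set Implicit Arguments.

Section Graphs.
Variable V : Type.

Definition simple_graph (adj : V -> V -> Prop) : Prop :=
  (forall x y, adj x y -> adj y x) /\ (forall x, ~ adj x x).

Definition reach (E : V -> V -> Prop) (S : V -> Prop) (x y : V) : Prop :=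
  S x /\ clos_refl_trans V (fun a b => S a /\ S b /\ E a b) x y.

Definition gconnected (E : V -> V -> Prop) (S : V -> Prop) : Prop :=
  (exists x, S x) /\ forall x y, S x -> S y -> reach E S x y.

Definition subgraph (adj : V -> V -> Prop) (HV : V -> Prop) (HE : V -> V -> Prop)
  : Prop :=
  forall x y, HE x y -> HV x /\ HV y /\ adj x y /\ HE y x.

Definition component (adj : V -> V -> Prop) (S C : V -> Prop) : Prop :=
  (forall v, C v -> S v) /\ gconnected adj C /\
  forall D : V -> Prop, (forall v, C v -> D v) -> (forall v, D v -> S v) ->
    gconnected adj D -> forall v, D v -> C v.

Definition separates (adj : V -> V -> Prop) (X A B : V -> Prop) : Prop :=
  forall a b, A a -> B b -> ~ reach adj (fun v => ~ X v) a b.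

Fixpoint walk (E : V -> V -> Prop) (l : list V) : Prop :=
  match l with
  | x :: ((y :: _) as l') => E x y /\ walk E l'
  | _ => True
  end.
End Graphs.

Section Trees.
Variable T : Type.
Variable le : T -> T -> Prop.

Definition lt (x y : T) : Prop := le x y /\ x <> y.
Definition comparable (x y : T) : Prop := le x y \/ le y x.

Definition down (t : T) : T -> Prop := fun s => le s t.   (* ⌈t⌉ *)
Definition up (t : T) : T -> Prop := fun s => le t s.     (* ⌊t⌋ *)

Definition minimal_in (P : T -> Prop) (t : T) : Prop :=
  P t /\ forall s, P s -> le s t -> s = t.

Definition well_ordered_set (S : T -> Prop) : Prop :=
  (forall x y, S x -> S y -> comparable x y) /\
  (forall P : T -> Prop, (forall x, P x -> S x) -> (exists x, P x) ->
     exists m, P m /\ forall x, P x -> le m x).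

Definition order_tree : Prop :=
  ((forall x, le x x) /\ (forall x y, le x y -> le y x -> x = y) /\
   (forall x y z, le x y -> le y z -> le x z)) /\
  (exists r, minimal_in (fun _ => True) r /\
     forall r', minimal_in (fun _ => True) r' -> r' = r) /\
  (forall t, well_ordered_set (down t)).

Definition down_closed (X : T -> Prop) : Prop :=
  forall t s, X t -> le s t -> X s.

Definition T_graph (E : T -> T -> Prop) : Prop :=
  (forall t t', E t t' -> comparable t t') /\
  (forall t s, lt s t -> exists u, E u t /\ lt u t /\ le s u).
End Trees.

Section NSPT.
Variables (V T : Type) (adj : V -> V -> Prop) (le : T -> T -> Prop)
          (Vt : T -> V -> Prop).

Definition Vset (S : T -> Prop) : V -> Prop := fun v => exists t, S t /\ Vt t v.

(* contraction of G[U V] along the V_t, loops and parallel edges deleted *)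
Definition contracted (t t' : T) : Prop :=
  t <> t' /\ exists u w, Vt t u /\ Vt t' w /\ adj u w.

Definition normal_semi_partition_tree : Prop :=
  (forall t, exists v, Vt t v) /\
  (forall t t' v, Vt t v -> Vt t' v -> t = t') /\
  (forall t, gconnected adj (Vt t)) /\
  T_graph le contracted /\
  (forall (x y : V) (inner : list V) (t t' : T),
     inner <> [] -> NoDup (x :: inner ++ [y]) -> walk adj (x :: inner ++ [y]) ->
     (forall z, In z inner -> ~ Vset (fun _ => True) z) ->
     Vt t x -> Vt t' y -> comparable le t t').
End NSPT.

(** A walk either moves between
    adjacent parts V_s, V_s', whose nodes are then comparable because the
    contracted graph is a T-graph, or leaves ⋃𝒱 and comes back through a
    ⋃𝒱-path, which by normality again joins comparable nodes.  So
    consecutive parts visited by a walk have comparable nodes, and by the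
    well-ordering of down-closures a walk starting in V(⌊m⌋), for m minimal
    among the nodes whose parts it may visit, stays in V(⌊m⌋).  This gives
    (1), and (2) follows from (1) applied to a minimal node met by H and
    any other node met by H.  On the other hand every G(⌊t⌋) is connected
    (climb along the cofinal down-edges of the T-graph), so for t minimal
    outside T' it is a component of G(T) - G(T'), which yields (3) and (4). *)

From Stdlib Require Import List Relations Classical.
Import ListNotations.
Set Implicit Arguments.
Unset Strict Implicit.

Section Reachability.
Variables (V : Type) (E : V -> V -> Prop).

Lemma reach_target S x y : reach E S x y -> S y.
Proof.
  intros [Hx H]. induction H as [a b (_ & Hb & _)| |]; auto.
Qed.

Lemma reach_trans S x y z : reach E S x y -> reach E S y z -> reach E S x z.
Proof. intros [Hx H1] [_ H2]. split; auto. eapply rt_trans; eauto. Qed.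

Lemma reach_edge (S : V -> Prop) x y : S x -> S y -> E x y -> reach E S x y.
Proof. intros. split; auto. apply rt_step. auto. Qed.

Lemma reach_mono E' (S S' : V -> Prop) x y :
  (forall v, S v -> S' v) -> (forall a b, S a -> S b -> E a b -> E' a b) ->
  reach E S x y -> reach E' S' x y.
Proof.
  intros HS HE [Hx H]. split; auto. clear Hx.
  induction H as [a b (Ha & Hb & Hab)| |].
  - apply rt_step. repeat split; auto.
  - apply rt_refl.
  - eapply rt_trans; eauto.
Qed.

Hypothesis E_sym : forall x y, E x y -> E y x.

Lemma reach_sym S x y : reach E S x y -> reach E S y x.
Proof.
  intros Hr. split; [exact (reach_target Hr)|]. destruct Hr as [_ H].
  induction H as [a b (Ha & Hb & Hab)| |].
  - apply rt_step. repeat split; auto.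
  - apply rt_refl.
  - eapply rt_trans; eauto.
Qed.

Lemma gconnected_union (A B : V -> Prop) c :
  gconnected E A -> gconnected E B -> A c -> B c ->
  gconnected E (fun v => A v \/ B v).
Proof.
  intros [_ HA] [_ HB] Ac Bc. split; [exists c; auto|].
  assert (Hc : forall x, A x \/ B x -> reach E (fun v => A v \/ B v) c x).
  { intros x [Hx|Hx].
    - eapply reach_mono; [| |apply HA; eauto]; simpl; auto.
    - eapply reach_mono; [| |apply HB; eauto]; simpl; auto. }
  intros x y Hx Hy. apply reach_trans with c; [apply reach_sym|]; auto.
Qed.

Lemma component_absorbs S C D c :
  component E S C -> gconnected E D -> (forall v, D v -> S v) ->
  C c -> D c -> forall v, D v -> C v.
Proof.
  intros (HCS & HC & Hmax) HD HDS Cc Dc v Dv.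
  apply (Hmax (fun v => C v \/ D v)); auto.
  - intros w [Hw|Hw]; auto.
  - apply gconnected_union with c; auto.
Qed.

Lemma component_unique S C D c :
  component E S C -> component E S D -> C c -> D c -> forall v, C v <-> D v.
Proof.
  intros HC HD Cc Dc v. split.
  - apply (component_absorbs (c := c) HD (proj1 (proj2 HC)) (proj1 HC)); auto.
  - apply (component_absorbs (c := c) HC (proj1 (proj2 HD)) (proj1 HD)); auto.
Qed.

End Reachability.

Lemma component_ext V (E : V -> V -> Prop) S (C D : V -> Prop) :
  (forall v, C v <-> D v) -> component E S C -> component E S D.
Proof.
  intros HCD (HCS & [[c Hc] HCc] & Hmax). split; [|split; [split|]].
  - intros v Hv. apply HCS, HCD, Hv.
  - exists c. apply HCD, Hc.
  - intros x y Hx Hy. apply reach_mono with (E := E) (S := C); auto.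
    + intros v. apply HCD.
    + apply HCc; apply HCD; auto.
  - intros D' HD' HD'S HD'c v Hv. apply HCD.
    apply (Hmax D'); auto. intros w Hw. apply HD', HCD, Hw.
Qed.

Lemma walk_app_r V (E : V -> V -> Prop) l1 l2 : walk E (l1 ++ l2) -> walk E l2.
Proof.
  induction l1 as [|a l1 IH]; simpl; auto.
  intros H. apply IH. destruct (l1 ++ l2); simpl in *; tauto.
Qed.

Lemma comparable_sym T (le : T -> T -> Prop) x y :
  comparable le x y -> comparable le y x.
Proof. intros [H|H]; [right|left]; exact H. Qed.

Section OrderTree.
Variables (T : Type) (le : T -> T -> Prop).
Hypothesis tree : order_tree le.

Lemma tree_refl x : le x x.
Proof. apply tree. Qed.

Lemma tree_antisym x y : le x y -> le y x -> x = y.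
Proof. apply tree. Qed.

Lemma tree_trans x y z : le x y -> le y z -> le x z.
Proof. apply tree. Qed.

Lemma down_comparable t x y : le x t -> le y t -> comparable le x y.
Proof. intros. apply (proj1 (proj2 (proj2 tree) t)); auto. Qed.

Lemma minimal_below (P : T -> Prop) s : P s -> exists m, le m s /\ minimal_in le P m.
Proof.
  intros Ps.
  destruct (proj2 (proj2 (proj2 tree) s) (fun x => le x s /\ P x))
    as (m & (Hms & Pm) & Hleast).
  { intros x Hx. apply Hx. }
  { exists s. split; [apply tree_refl|]; auto. }
  exists m. split; [exact Hms|]. split; [exact Pm|].
  intros x Px Hxm. apply tree_antisym; auto.
  apply Hleast. split; [apply tree_trans with (y := m)|]; auto.
Qed.

Lemma tree_ind (P : T -> Prop) :
  (forall x, (forall y, lt le y x -> P y) -> P x) -> forall x, P x.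
Proof.
  intros Hstep x. apply NNPP. intros Hx.
  destruct (minimal_below (P := fun y => ~ P y) Hx) as (m & _ & Hm & Hmin).
  apply Hm, Hstep. intros y [Hym Hne]. apply NNPP. intros Hy.
  exact (Hne (Hmin y Hy Hym)).
Qed.

End OrderTree.

Section NormalSemiPartitionTree.
Variables (V T : Type) (adj : V -> V -> Prop) (le : T -> T -> Prop)
          (Vt : T -> V -> Prop).
Hypotheses (graph : simple_graph adj) (tree : order_tree le)
           (nspt : normal_semi_partition_tree adj le Vt).

Local Notation covered := (Vset Vt (fun _ => True)).

Lemma adj_sym x y : adj x y -> adj y x.
Proof. apply graph. Qed.

Lemma part_nonempty t : exists v, Vt t v.
Proof. apply nspt. Qed.

Lemma part_unique s s' v : Vt s v -> Vt s' v -> s = s'.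
Proof. apply nspt. Qed.

Lemma part_covered s v : Vt s v -> covered v.
Proof. intros Hv. exists s. split; auto. Qed.

Lemma reach_in_part (X : V -> Prop) s x y :
  (forall v, Vt s v -> X v) -> Vt s x -> Vt s y -> reach adj X x y.
Proof.
  intros HX Hx Hy. apply reach_mono with (E := adj) (S := Vt s); auto.
  apply (proj2 (proj1 (proj2 (proj2 nspt)) s)); auto.
Qed.

Lemma adj_parts_comparable s s' x y :
  Vt s x -> Vt s' y -> adj x y -> comparable le s s'.
Proof.
  intros Hx Hy Hxy. destruct (classic (s = s')) as [<-|Hne].
  - left. apply tree_refl, tree.
  - apply (proj1 (proj1 (proj2 (proj2 (proj2 nspt))))).
    split; [exact Hne|]. eauto.
Qed.

(* Links an uncovered vertex b of a walk back to the last covered vertex x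
   before it, in the list form required by normality. *)
Definition bridge_to (x b : V) : Prop :=
  exists q, Forall (fun z => ~ covered z) (b :: q) /\
    NoDup (b :: q ++ [x]) /\ walk adj (b :: q ++ [x]).

Lemma bridge_start x b : covered x -> ~ covered b -> adj b x -> bridge_to x b.
Proof.
  intros Hx Hb Hbx. exists []. simpl. split; [|split].
  - constructor; auto.
  - constructor; [intros [->|[]]; contradiction | constructor; [auto|constructor]].
  - auto.
Qed.

Lemma bridge_step x v w :
  covered x -> bridge_to x v -> ~ covered w -> adj w v -> bridge_to x w.
Proof.
  intros Hx (q & Hout & Hnd & Hwalk) Hw Hwv.
  destruct (classic (In w (v :: q))) as [Hin|Hnin].
  - (* the walk returns to w: cut off the loop *)
    apply in_split in Hin as (l1 & l2 & Heq).
    assert (Hsplit : v :: q ++ [x] = l1 ++ w :: l2 ++ [x]).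
    { change (v :: q ++ [x]) with ((v :: q) ++ [x]).
      rewrite Heq, <- app_assoc. reflexivity. }
    exists l2. rewrite Heq in Hout. rewrite Hsplit in Hnd, Hwalk. split; [|split].
    + apply Forall_app in Hout. apply Hout.
    + exact (NoDup_app_remove_l _ _ Hnd).
    + exact (walk_app_r Hwalk).
  - exists (v :: q). split; [|split].
    + constructor; auto.
    + constructor; [|exact Hnd]. intros Hin.
      change (In w ((v :: q) ++ [x])) in Hin.
      apply in_app_or in Hin as [Hin|[<-|[]]]; contradiction.
    + split; auto.
Qed.

Lemma bridge_comparable x y v s s' :
  bridge_to x v -> adj v y -> Vt s x -> Vt s' y -> comparable le s s'.
Proof.
  intros (q & Hout & Hnd & Hwalk) Hvy Hx Hy.
  rewrite Forall_forall in Hout.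
  destruct (classic (y = x)) as [->|Hyx].
  - rewrite (part_unique Hx Hy). left. apply tree_refl, tree.
  - apply comparable_sym.
    apply (proj2 (proj2 (proj2 (proj2 nspt))) y x (v :: q) s' s); auto.
    + discriminate.
    + constructor; [|exact Hnd]. intros Hin.
      apply in_app_or in Hin as [Hin|[->|[]]]; [|contradiction].
      exact (Hout y Hin (part_covered Hy)).
    + split; [apply adj_sym|]; assumption.
Qed.

Lemma reach_transport (S : V -> Prop) (Q : T -> Prop) a b s s' :
  (forall u u', Q u -> comparable le u u' -> (exists v, S v /\ Vt u' v) -> Q u') ->
  Vt s a -> Q s -> reach adj S a b -> Vt s' b -> Q s'.
Proof.
  intros HQ Ha Qs [_ Hr] Hb.
  enough (J : (forall s', Vt s' b -> Q s') /\
              (~ covered b -> exists x u, Vt u x /\ Q u /\ bridge_to x b))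
    by exact (proj1 J s' Hb).
  clear Hb. apply clos_rt_rtn1_iff in Hr.
  induction Hr as [|v w (Sv & Sw & Hvw) _ [IHQ IHb]].
  - split.
    + intros s'' Hs''. rewrite <- (part_unique Ha Hs''). exact Qs.
    + intros Hna. contradiction (Hna (part_covered Ha)).
  - destruct (classic (covered w)) as [(sw & _ & Hw)|Hw].
    + split; [|intros Hnw; contradiction (Hnw (part_covered Hw))].
      intros s'' Hs''. rewrite <- (part_unique Hw Hs'').
      assert (Hcmp : exists u, Q u /\ comparable le u sw).
      { destruct (classic (covered v)) as [(sv & _ & Hv)|Hv].
        - exists sv. split; [apply IHQ, Hv | exact (adj_parts_comparable Hv Hw Hvw)].
        - destruct (IHb Hv) as (x & u & Hx & Qu & Hbr).
          exists u. split; [exact Qu | exact (bridge_comparable Hbr Hvw Hx Hw)]. }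
      destruct Hcmp as (u & Qu & Hc). apply (HQ u); eauto.
    + split; [intros s'' Hs''; contradiction (Hw (part_covered Hs''))|]. intros _.
      destruct (classic (covered v)) as [(sv & _ & Hv)|Hv].
      * exists v, sv. split; [|split]; auto.
        apply bridge_start; [exact (part_covered Hv) | exact Hw | apply adj_sym, Hvw].
      * destruct (IHb Hv) as (x & u & Hx & Qu & Hbr). exists x, u. split; [|split]; auto.
        apply bridge_step with v; [exact (part_covered Hx) | exact Hbr | exact Hw |].
        apply adj_sym, Hvw.
Qed.

Lemma reach_stays_above (P : T -> Prop) (S : V -> Prop) m a b s s' :
  minimal_in le P m -> (forall v u, S v -> Vt u v -> P u) ->
  le m s -> Vt s a -> reach adj S a b -> Vt s' b -> le m s'.
Proof.
  intros [Pm Hmin] HSP Hms Ha Hr Hb.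
  apply (reach_transport (S := S) (Q := le m) (a := a) (b := b) (s := s)); auto.
  intros u u' Hmu [Huu'|Hu'u] (v & Sv & Hv); [exact (tree_trans tree Hmu Huu')|].
  destruct (down_comparable tree Hmu Hu'u) as [Hmu'|Hu'm]; [exact Hmu'|].
  rewrite (Hmin u' (HSP v u' Sv Hv) Hu'm). apply tree_refl, tree.
Qed.

Lemma down_meet_separates t t' :
  ~ comparable le t t' ->
  separates adj (Vset Vt (fun s => down le t s /\ down le t' s)) (Vt t) (Vt t').
Proof.
  intros Hinc a b Ha Hb Hr.
  set (P := fun x => ~ (down le t x /\ down le t' x)).
  assert (Pt : P t) by (intros [_ H]; apply Hinc; left; exact H).
  destruct (minimal_below tree Pt) as (m & Hmt & Hm).
  apply (proj1 Hm). split; [exact Hmt|].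
  refine (reach_stays_above Hm _ Hmt Ha Hr Hb).
  intros v u Hv Hu Hd. apply Hv. exists u. split; assumption.
Qed.

Lemma connected_least_node (HV : V -> Prop) HE m :
  subgraph adj HV HE -> gconnected HE HV ->
  minimal_in le (fun s => exists v, Vt s v /\ HV v) m ->
  forall s, (exists v, Vt s v /\ HV v) -> le m s.
Proof.
  intros Hsub [_ Hcon] [(vm & Hvm & HVm) Hmin] s (v & Hv & HVv).
  destruct (classic (comparable le m s)) as [[Hms|Hsm]|Hinc]; [exact Hms| |].
  - rewrite (Hmin s (ex_intro _ v (conj Hv HVv)) Hsm). apply tree_refl, tree.
  - exfalso.
    assert (Hmeet : exists x u, HV x /\ Vt u x /\ le u m /\ le u s).
    { apply NNPP. intros Hno. apply (down_meet_separates Hinc Hvm Hv).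
      apply reach_mono with (E := HE) (S := HV); [| |apply Hcon; auto].
      - intros x HVx (u & [Hum Hus] & Hux). apply Hno. exists x, u. auto.
      - intros x y _ _ Hxy. apply (Hsub x y Hxy). }
    destruct Hmeet as (x & u & HVx & Hux & Hum & Hus).
    apply Hinc. left. rewrite <- (Hmin u (ex_intro _ x (conj Hux HVx)) Hum). exact Hus.
Qed.

Lemma unique_minimal_node (HV : V -> Prop) HE :
  subgraph adj HV HE -> gconnected HE HV -> (exists v, HV v /\ covered v) ->
  exists t, minimal_in le (fun s => exists v, Vt s v /\ HV v) t /\
    forall t', minimal_in le (fun s => exists v, Vt s v /\ HV v) t' -> t' = t.
Proof.
  intros Hsub Hcon (v & HVv & s & _ & Hv).
  assert (Hs : exists v, Vt s v /\ HV v) by eauto.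
  destruct (minimal_below tree (P := fun s => exists v, Vt s v /\ HV v) Hs)
    as (m & _ & Hm).
  exists m. split; [exact Hm|].
  intros t' [Ht' Hmin']. symmetry.
  apply Hmin'; [exact (proj1 Hm) | exact (connected_least_node Hsub Hcon Hm Ht')].
Qed.

Lemma Vset_up_avoids (T' : T -> Prop) t v :
  down_closed le T' -> ~ T' t -> Vset Vt (up le t) v -> ~ Vset Vt T' v.
Proof.
  intros HT' Ht (s & Hts & Hs) (s' & Hs' & Hs'v).
  rewrite (part_unique Hs'v Hs) in Hs'. exact (Ht (HT' _ _ Hs' Hts)).
Qed.

Lemma Vset_up_connected t : gconnected adj (Vset Vt (up le t)).
Proof.
  destruct (part_nonempty t) as [a Ha].
  assert (Hup : forall s, le t s -> forall b, Vt s b -> reach adj (Vset Vt (up le t)) a b).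
  { intros s. induction s as [s IH] using (tree_ind tree). intros Hts b Hb.
    destruct (classic (s = t)) as [->|Hne].
    - apply reach_in_part with t; auto.
      intros v Hv. exists t. split; [apply tree_refl, tree | exact Hv].
    -       destruct (proj2 (proj1 (proj2 (proj2 (proj2 nspt)))) s t (conj Hts (not_eq_sym Hne)))
        as (u & (_ & u0 & w0 & Hu0 & Hw0 & Hadj) & Hus & Htu).
      apply reach_trans with u0; [exact (IH u Hus Htu u0 Hu0)|].
      apply reach_trans with w0.
      + apply reach_edge; [exists u | exists s | exact Hadj]; split; auto.
      + apply reach_in_part with s; auto. intros v Hv. exists s. split; auto. }
  split; [exists a, t; split; [apply tree_refl, tree | exact Ha]|].
  intros x y (s1 & H1 & Hx) (s2 & H2 & Hy).
  apply reach_trans with a; [apply (reach_sym adj_sym)|]; eauto.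
Qed.

Lemma Vset_up_component (T' : T -> Prop) t :
  down_closed le T' -> minimal_in le (fun s => ~ T' s) t ->
  component adj (fun v => covered v /\ ~ Vset Vt T' v) (Vset Vt (up le t)).
Proof.
  intros HT' Ht. split; [|split].
  - intros v Hv. split; [|exact (Vset_up_avoids HT' (proj1 Ht) Hv)].
    destruct Hv as (s & _ & Hs). exact (part_covered Hs).
  - apply Vset_up_connected.
  - intros D Hsub HDS [_ HDc] v Dv.
    destruct (part_nonempty t) as [a Ha].
    destruct (proj1 (HDS v Dv)) as (s & _ & Hs).
    exists s. split; [|exact Hs].
    assert (Da : D a).
    { apply Hsub. exists t. split; [apply tree_refl, tree | exact Ha]. }
    refine (reach_stays_above Ht _ (tree_refl tree t) Ha (HDc a v Da Dv) Hs).
    intros w u Dw Hu HTu. apply (proj2 (HDS w Dw)). exists u. auto.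
Qed.

Lemma component_covered_up (T' : T -> Prop) :
  down_closed le T' -> forall C, component adj (fun v => covered v /\ ~ Vset Vt T' v) C ->
  exists t, minimal_in le (fun s => ~ T' s) t /\
    forall v, C v <-> Vset Vt (up le t) v.
Proof.
  intros HT' C HC.
  destruct (proj1 (proj2 HC)) as [[c Hc] _].
  destruct (proj1 HC c Hc) as [(s & _ & Hs) Hns].
  assert (Ps : ~ T' s) by (intros H; apply Hns; exists s; auto).
  destruct (minimal_below tree (P := fun s => ~ T' s) Ps) as (t & Hts & Ht).
  exists t. split; [exact Ht|].
  apply (component_unique (c := c) adj_sym HC (Vset_up_component HT' Ht) Hc).
  exists s. auto.
Qed.

Lemma component_trace_covered (T' : T -> Prop) :
  down_closed le T' -> forall C, component adj (fun v => ~ Vset Vt T' v) C ->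
  (exists v, C v /\ covered v) ->
  component adj (fun v => covered v /\ ~ Vset Vt T' v) (fun v => C v /\ covered v).
Proof.
  intros HT' C HC (c & Hc & s & _ & Hs).
  assert (Ps : ~ T' s) by (intros H; apply (proj1 HC c Hc); exists s; auto).
  destruct (minimal_below tree (P := fun s => ~ T' s) Ps) as (t & Hts & Ht).
  apply (component_ext (C := Vset Vt (up le t))); [|exact (Vset_up_component HT' Ht)].
  intros v. split.
  - intros Hv. split; [|destruct Hv as (u & _ & Hu); exact (part_covered Hu)].
    apply (component_absorbs (c := c) adj_sym HC (Vset_up_connected t)); auto.
    + intros w. apply Vset_up_avoids; [exact HT' | exact (proj1 Ht)].
    + exists s. auto.
  - intros [Cv (u & _ & Hu)]. exists u. split; [|exact Hu].
    refine (reach_stays_above Ht _ Hts Hs (proj2 (proj1 (proj2 HC)) c v Hc Cv) Hu).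
    intros w u' Cw Hu' HTu'. apply (proj1 HC w Cw). exists u'. auto.
Qed.

End NormalSemiPartitionTree.
Theorem lemma4p1 (V T : Type) (adj : V -> V -> Prop) (le : T -> T -> Prop)
    (Vt : T -> V -> Prop) :
  simple_graph adj -> gconnected adj (fun _ => True) -> order_tree le ->
  normal_semi_partition_tree adj le Vt ->
  (* (1) *)
  (forall t t', ~ comparable le t t' ->
     separates adj (Vset Vt (fun s => down le t s /\ down le t' s)) (Vt t) (Vt t')) /\
  (* (2) *)
  (forall (HV : V -> Prop) (HE : V -> V -> Prop),
     subgraph adj HV HE -> gconnected HE HV ->
     (exists v, HV v /\ Vset Vt (fun _ => True) v) ->
     exists t, minimal_in le (fun s => exists v, Vt s v /\ HV v) t /\
       forall t', minimal_in le (fun s => exists v, Vt s v /\ HV v) t' -> t' = t) /\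
  (* (3) *)
  (forall T' : T -> Prop, down_closed le T' ->
     forall C : V -> Prop,
       component adj (fun v => Vset Vt (fun _ => True) v /\ ~ Vset Vt T' v) C ->
       exists t, minimal_in le (fun s => ~ T' s) t /\
         forall v, C v <-> Vset Vt (up le t) v) /\
  (* (4) *)
  (forall T' : T -> Prop, down_closed le T' ->
     forall C : V -> Prop,
       component adj (fun v => ~ Vset Vt T' v) C ->
       (exists v, C v /\ Vset Vt (fun _ => True) v) ->
       component adj (fun v => Vset Vt (fun _ => True) v /\ ~ Vset Vt T' v)
                     (fun v => C v /\ Vset Vt (fun _ => True) v)).
Proof.
  intros Hsg _ Hot Hn. split; [|split; [|split]].
  - exact (down_meet_separates Hsg Hot Hn).
  - exact (unique_minimal_node Hsg Hot Hn).
  - exact (component_covered_up Hsg Hot Hn).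
  - exact (component_trace_covered Hsg Hot Hn).
Qed.
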